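(* Let $R$ be a commutative Noetherian ring of prime characteristic $p$ and suppose $c$ is a $p^{w_0}$-weak test element for $R$ for some $w_0\in\mathbb{N}_0$. For each ideal $\mathfrak{a}$ of $R$ let $H(\mathfrak{a})=\bigoplus_{n\ge0}R/\mathfrak{a}^{[p^n]}$ be the graded left $R[x,f]$-module in which $x(r+\mathfrak{a}^{[p^n]})=r^p+\mathfrak{a}^{[p^{n+1}]}$ (from degree $n$ to degree $n+1$), and let $H:=\bigoplus_{\mathfrak{a}}H(\mathfrak{a})$ (direct sum over all ideals $\mathfrak{a}$ of $R$). Let $T:=\bigoplus_{\mathfrak{a}}\bigoplus_{n\ge0}(\mathfrak{a}^{[p^n]})^*/\mathfrak{a}^{[p^n]}$. Then: (i) $T=\operatorname{ann}_H(\bigoplus_{n\ge w_0}Rcx^n)$, so $T$ is a special annihilator submodule of $H$; (ii) writing $\operatorname{grann}_{R[x,f]}T=\bigoplus_{n\ge0}\mathfrak{c}_nx^n$ with $(\mathfrak{c}_n)$ ascending, the eventual constant value $\lim_{n\to\infty}\mathfrak{c}_n$ equals the weak test ideal $\tau'(R)$; (iii) $T$ contains every special annihilator submodule $T'$ of $H$ whose graded annihilator $\bigoplus_n\mathfrak{b}_nx^n$ satisfies $\operatorname{height}(\lim_{n\to\infty}\mathfrak{b}_n)\ge1$ (with $\operatorname{height}R=\infty$).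
   Context: $R[x,f]$ is the Frobenius skew polynomial ring: free left $R$-module on $(x^i)_{i\ge0}$, $xr=r^px$. Graded two-sided ideals are $\bigoplus_n\mathfrak{b}_nx^n$ with $(\mathfrak{b}_n)$ ascending chains of ideals (eventually constant). For a graded two-sided ideal $\mathfrak{B}$, $\operatorname{ann}_H\mathfrak{B}=\{h:\theta h=0\ \forall\theta\in\mathfrak{B}\}$; special annihilator submodules are those of this form. $\operatorname{grann}N$ is the set of $\sum r_ix^i$ with each $r_ix^i$ annihilating $N$. $\mathfrak{a}^{[p^n]}$ is generated by $p^n$-th powers; $R^\circ$ is the complement of the union of minimal primes; $r\in\mathfrak{a}^*$ iff some $c\in R^\circ$ has $cr^{p^n}\in\mathfrak{a}^{[p^n]}$ for all $n\gg0$. A $p^{w_0}$-weak test element is $c\in R^\circ$ such that for every ideal $\mathfrak{b}$ and $r\in R$: $r\in\mathfrak{b}^*$ iff $cr^{p^n}\in\mathfrak{b}^{[p^n]}$ for all $n\ge w_0$. The weak test ideal $\tau'(R)$ is the ideal generated by $0$ and all $p^w$-weak test elements for all $w\in\mathbb{N}_0$. *)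

From mathcomp Require Import all_boot all_algebra.
Set Implicit Arguments. Unset Strict Implicit. Unset Printing Implicit Defensive.
Import GRing.Theory.
Local Open Scope ring_scope.

Section Defs.
Variable R : comNzRingType.

Definition is_ideal (I : R -> Prop) : Prop :=
  [/\ I 0, (forall x y, I x -> I y -> I (x + y)) & (forall r x, I x -> I (r * x))].

Record ideal := Ideal { ideal_pred :> R -> Prop; ideal_ax : is_ideal ideal_pred }.

Definition subI (I J : R -> Prop) : Prop := forall x, I x -> J x.
Definition eqI (I J : R -> Prop) : Prop := forall x, I x <-> J x.

Definition gen_ideal (S : R -> Prop) : R -> Prop :=
  fun r => forall J : ideal, subI S J -> J r.

Definition noetherian : Prop :=
  forall I : nat -> ideal, (forall n, subI (I n) (I n.+1)) ->
    exists N, forall n, (N <= n)%N -> eqI (I n) (I N).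

Definition prime_ideal (P : R -> Prop) : Prop :=
  [/\ is_ideal P, ~ P 1 & forall a b, P (a * b) -> P a \/ P b].

Definition minimal_prime (P : R -> Prop) : Prop :=
  prime_ideal P /\ forall Q, prime_ideal Q -> subI Q P -> subI P Q.

Definition Rcirc (c : R) : Prop := forall P, minimal_prime P -> ~ P c.

(* height(I) >= n : every prime P containing I is the top of a strictly
   descending chain of primes P = Q_0 > Q_1 > ... > Q_n.
   (height of the unit ideal is infinity: vacuous.) *)
Definition height_ge (n : nat) (I : R -> Prop) : Prop :=
  forall P, prime_ideal P -> subI I P ->
    exists Q : nat -> R -> Prop,
      [/\ eqI (Q 0%N) P,
          (forall i, (i <= n)%N -> prime_ideal (Q i)) &
          (forall i, (i < n)%N -> subI (Q i.+1) (Q i) /\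
                                   exists x, Q i x /\ ~ Q i.+1 x)].

Variable p : nat.

Definition frob (a : R -> Prop) (n : nat) : R -> Prop :=
  gen_ideal (fun y => exists2 s, a s & y = s ^+ (p ^ n)).

Definition tight (a : R -> Prop) (r : R) : Prop :=
  exists2 c, Rcirc c &
    exists N, forall n, (N <= n)%N -> frob a n (c * r ^+ (p ^ n)).

Definition weak_test (w0 : nat) (c : R) : Prop :=
  Rcirc c /\
  forall (b : ideal) (r : R),
    tight b r <-> (forall n, (w0 <= n)%N -> frob b n (c * r ^+ (p ^ n))).

Definition weak_test_ideal : R -> Prop :=
  gen_ideal (fun y => y = 0 \/ exists w, weak_test w y).

(* An element is given by representatives h a n of its (a,n)-component;
   it must have finite support. *)
Definition Hrep := ideal -> nat -> R.

Fixpoint inL {A : Type} (x : A) (l : list A) : Prop :=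
  match l with nil => False | cons y l' => y = x \/ inL x l' end.

Definition inH (h : Hrep) : Prop :=
  exists l : list (ideal * nat),
    forall (a : ideal) n, ~ inL (a, n) l -> frob a n (h a n).

Definition zeroH (h : Hrep) : Prop := forall (a : ideal) n, frob a n (h a n).

(* elements of R[x,f] are coefficient lists theta = sum_i theta`_i x^i;
   action: x^i (r + a^[p^n]) = r^(p^i) + a^[p^(n+i)] *)
Definition act (theta : seq R) (h : Hrep) : Hrep :=
  fun a m => \sum_(i < size theta)
               (if (i <= m)%N then theta`_i * h a (m - i)%N ^+ (p ^ i) else 0).

Definition homog (r : R) (n : nat) : seq R := rcons (nseq n 0) r.

(* graded two-sided ideal (+)_n b_n x^n, given by ascending chain b *)
Definition ascending (b : nat -> ideal) : Prop := forall n, subI (b n) (b n.+1).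

Definition inB (b : nat -> R -> Prop) (theta : seq R) : Prop :=
  forall i, b i theta`_i.

Definition annH (b : nat -> R -> Prop) (h : Hrep) : Prop :=
  forall theta, inB b theta -> zeroH (act theta h).

Definition eqH (N M : Hrep -> Prop) : Prop := forall h, inH h -> (N h <-> M h).
Definition subH (N M : Hrep -> Prop) : Prop := forall h, inH h -> N h -> M h.

Definition special (N : Hrep -> Prop) : Prop :=
  exists b : nat -> ideal, ascending b /\ eqH N (annH (fun n r => b n r)).

Definition grann (N : Hrep -> Prop) (n : nat) : R -> Prop :=
  fun r => forall h, inH h -> N h -> zeroH (act (homog r n) h).

Definition Tsub : Hrep -> Prop := fun h => forall (a : ideal) n, tight (frob a n) (h a n).

End Defs.

(* For each n let C_n (tight_ann n) be the ideal of those r with r z^(p^n) in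
   a^[p^n] for every ideal a and every z in a^*; it is exactly the degree-n part of
   grann T, and the C_n ascend, hence stabilise since R is Noetherian.
   (i) For n >= w0, c x^n kills T because c is a p^w0-weak test element; conversely,
   being killed by all these c x^n is the weak test criterion for lying in a^*.
   (ii) Weak test elements lie in the stable C_N.  Conversely, for r in C_N prime
   avoidance over the finitely many minimal primes gives u with r + u c in R^o; then
   r + u c is a p^N-weak test element, so r = (r + u c) - u c lies in tau'(R).
   (iii) An ideal of height >= 1 lies in no minimal prime, so prime avoidance gives
   d in R^o with d x^n killing T' for n >> 0, which says that each component of an
   element of T' lies in the tight closure. *)

From mathcomp Require Import all_boot all_algebra.
From mathcomp Require Import ring.
From Stdlib Require Import Classical ClassicalEpsilon.
From Stdlib Require List.
Import GRing.Theory.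
Local Open Scope ring_scope.

Section Ideals.
Context {R : comNzRingType}.
Implicit Types (I J S P : R -> Prop) (a x y r : R).

Section IdealClosure.
Context {I : R -> Prop} (hI : is_ideal I).

Lemma ideal0 : I 0. Proof. by case: hI. Qed.

Lemma idealD {x y} : I x -> I y -> I (x + y). Proof. by case: hI => _ + _; apply. Qed.

Lemma idealMl r {x} : I x -> I (r * x). Proof. by case: hI => _ _; apply. Qed.

Lemma idealMr r {x} : I x -> I (x * r). Proof. by rewrite mulrC; apply: idealMl. Qed.

Lemma idealB {x y} : I x -> I y -> I (x - y).
Proof. by move=> Ix Iy; rewrite -mulN1r; apply: idealD => //; apply: idealMl. Qed.

Lemma ideal_sum {n} {F : 'I_n -> R} : (forall i, I (F i)) -> I (\sum_(i < n) F i).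
Proof. by move=> IF; apply: (big_ind I) => // [|x y]; [apply: ideal0 | apply: idealD]. Qed.

End IdealClosure.

Lemma prime_is_ideal {P} : prime_ideal P -> is_ideal P. Proof. by case. Qed.

Lemma not_subI_ex {I J} : ~ subI I J -> exists2 x, I x & ~ J x.
Proof.
move=> nIJ; apply: NNPP => none; apply: nIJ => x Ix; apply: NNPP => nJx.
by apply: none; exists x.
Qed.

Lemma gen_ideal_is_ideal S : is_ideal (gen_ideal S).
Proof.
split=> [J _ | x y Sx Sy J SJ | r x Sx J SJ].
- exact: ideal0 (ideal_ax J).
- exact: (idealD (ideal_ax J) (Sx J SJ) (Sy J SJ)).
- exact: (idealMl (ideal_ax J) r (Sx J SJ)).
Qed.

Lemma gen_ideal_sub {S} : subI S (gen_ideal S).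
Proof. by move=> x Sx J; apply. Qed.

Lemma gen_ideal_min {S} (J : ideal R) : subI S J -> subI (gen_ideal S) J.
Proof. by move=> SJ x; apply. Qed.

Definition principal a : R -> Prop := fun r => exists s, r = s * a.

Lemma principal_is_ideal a : is_ideal (principal a).
Proof.
split=> [|_ _ [s ->] [t ->] | r _ [s ->]]; first by exists 0; rewrite mul0r.
- by exists (s + t); rewrite mulrDl.
- by exists (r * s); rewrite mulrA.
Qed.

Definition principal_ideal a : ideal R := Ideal (principal_is_ideal a).

Lemma principal_gen a : principal a a. Proof. by exists 1; rewrite mul1r. Qed.

Lemma principal0 {r} : principal 0 r <-> r = 0.
Proof. by split=> [[s ->] | ->]; [rewrite mulr0 | exists 0; rewrite mulr0]. Qed.

End Ideals.

Section Noetherian.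
Context {R : comNzRingType}.
Hypothesis hN : noetherian R.
Implicit Types (I J P Q : R -> Prop) (a x : R).

Definition ssubI I J : Prop := subI I J /\ ~ subI J I.

Lemma noetherian_ind (G : ideal R -> Prop) :
  (forall I : ideal R, (forall J : ideal R, ssubI I J -> G J) -> G I) ->
  forall I : ideal R, G I.
Proof.
move=> Gind I; apply: NNPP => GI.
have grow (J : ideal R) : exists J' : ideal R, ~ G J -> ~ G J' /\ ssubI J J'.
  case: (classic (G J)) => GJ; first by exists J.
  apply: NNPP => none; apply: GJ; apply: Gind => J' sJJ'.
  by apply: NNPP => GJ'; apply: none; exists J'.
have [f fP] := choice _ grow.
pose chain n := iter n f I.
have chain_bad n : ~ G (chain n) by elim: n => [|n IH] //=; apply: (fP _ IH).1.
have [N stable] := hN chain (fun n => (fP _ (chain_bad n)).2.1).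
by apply: (fP _ (chain_bad N)).2.2 => x /(stable N.+1 (leqnSn N)).
Qed.

Definition prime_cover I (Qs : seq (R -> Prop)) : Prop :=
  (forall Q, List.In Q Qs -> prime_ideal Q /\ subI I Q) /\
  (forall P, prime_ideal P -> subI I P -> exists2 Q, List.In Q Qs & subI Q P).

Definition add_principal I a : R -> Prop := fun z => exists y t, I y /\ z = y + t * a.

Section AddPrincipal.
Context {I : R -> Prop} (a : R).

Lemma add_principal_is_ideal : is_ideal I -> is_ideal (add_principal I a).
Proof.
move=> hI; split.
- by exists 0, 0; split; [apply: ideal0 hI | rewrite mul0r addr0].
- move=> _ _ [y1 [t1 [Iy1 ->]]] [y2 [t2 [Iy2 ->]]].
  by exists (y1 + y2), (t1 + t2); split; [apply: idealD | ring].
- move=> r _ [y [t [Iy ->]]].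
  by exists (r * y), (r * t); split; [apply: idealMl | ring].
Qed.

Lemma add_principal_sub : subI I (add_principal I a).
Proof. by move=> x Ix; exists x, 0; rewrite mul0r addr0. Qed.

Lemma add_principal_gen : is_ideal I -> add_principal I a a.
Proof. by move=> hI; exists 0, 1; rewrite mul1r add0r; split=> //; apply: ideal0 hI. Qed.

Lemma add_principal_min {P} : is_ideal P -> subI I P -> P a -> subI (add_principal I a) P.
Proof.
by move=> hP sIP Pa _ [y [t [Iy ->]]]; apply: idealD (idealMl hP t Pa) => //; apply: sIP.
Qed.

End AddPrincipal.

Lemma prime_cover_cat {I : ideal R} {a b Qa Qb} : I (a * b) ->
  prime_cover (add_principal I a) Qa -> prime_cover (add_principal I b) Qb ->
  prime_cover I (Qa ++ Qb).
Proof.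
move=> Iab [Qa_prime Qa_cover] [Qb_prime Qb_cover]; split.
  move=> Q inQ; have [/Qa_prime | /Qb_prime] := List.in_app_or Qa Qb Q inQ;
    by move=> [pQ sQ]; split=> // x Ix; exact: (sQ x (add_principal_sub _ _ Ix)).
move=> P pP sIP; have [_ _ Pmul] := pP.
have [Pa | Pb] := Pmul a b (sIP _ Iab).
- have [Q inQ sQP] := Qa_cover P pP (add_principal_min _ (prime_is_ideal pP) sIP Pa).
  by exists Q => //; apply: List.in_or_app; left.
- have [Q inQ sQP] := Qb_cover P pP (add_principal_min _ (prime_is_ideal pP) sIP Pb).
  by exists Q => //; apply: List.in_or_app; right.
Qed.

Lemma prime_cover_exists (I : ideal R) : exists Qs, prime_cover I Qs.
Proof.
elim/noetherian_ind: I => I IH.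
case: (classic (I 1)) => [I1 | nI1].
  by exists [::]; split=> // P [_ nP1 _] sIP; case: nP1; apply: sIP.
case: (classic (prime_ideal I)) => [pI | npI].
  exists [:: (I : R -> Prop)]; split=> [Q [<- | []] | P _ sIP]; first by split.
  by exists I; first left.
have [a [b [Iab [nIa nIb]]]] : exists a b, I (a * b) /\ ~ I a /\ ~ I b.
  apply: NNPP => none; apply: npI; split=> //; first exact: ideal_ax.
  move=> a b Iab; apply: NNPP => nab; apply: none; exists a, b.
  by split=> //; split=> ?; apply: nab; [left | right].
have grow x : ~ I x -> ssubI I (Ideal (add_principal_is_ideal x (ideal_ax I))).
  move=> nIx; split; first exact: add_principal_sub.
  by move=> sI; apply/nIx/sI/add_principal_gen; apply: ideal_ax.
have [Qa ca] := IH _ (grow a nIa); have [Qb cb] := IH _ (grow b nIb).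
by exists (Qa ++ Qb); apply: prime_cover_cat Iab ca cb.
Qed.

End Noetherian.

Section MinimalPrimes.
Context {R : comNzRingType}.
Implicit Types (L P Q : R -> Prop) (Qs : seq (R -> Prop)).

Lemma Rcirc1 : Rcirc (1 : R). Proof. by move=> P [[_ P1 _] _]. Qed.

Lemma minimal_prime_sub {P Q} :
  minimal_prime P -> prime_ideal Q -> subI Q P -> minimal_prime Q /\ subI P Q.
Proof.
move=> [_ minP] pQ sQP; have sPQ := minP Q pQ sQP.
split=> //; split=> // Q' pQ' sQ'Q x Qx.
exact: (minP Q' pQ' (fun y Q'y => sQP y (sQ'Q y Q'y)) x (sQP x Qx)).
Qed.

Lemma ideal_cap_minimal_primes_not_sub {P} {I : ideal R} {Qs} :
  prime_ideal P -> ~ subI I P ->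
  (forall Q, List.In Q Qs -> minimal_prime Q -> ~ subI Q P) ->
  exists z, [/\ I z, forall Q, List.In Q Qs -> minimal_prime Q -> Q z & ~ P z].
Proof.
move=> [_ _ Pmul] /not_subI_ex [l Il nPl].
elim: Qs => [|Q Qs IH] QsP; first by exists l.
have [z [Iz Qsz nPz]] := IH (fun Q' inQ' => QsP Q' (or_intror inQ')).
case: (classic (minimal_prime Q)) => [mQ | nmQ]; last first.
  by exists z; split=> // Q' [<- // | ]; apply: Qsz.
have [w Qw nPw] := not_subI_ex (QsP Q (or_introl erefl) mQ).
exists (z * w); split; first exact: (idealMr (ideal_ax I) w Iz).
- move=> Q' [<- mQ' | inQ' mQ']; first exact: (idealMl (prime_is_ideal mQ'.1) z Qw).
  exact: (idealMr (prime_is_ideal mQ'.1) w (Qsz Q' inQ' mQ')).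
- by case/Pmul.
Qed.

Lemma coset_avoids_minimal_primes {I : ideal R} r {Qs} :
  (forall Q, List.In Q Qs -> minimal_prime Q -> ~ subI I Q) ->
  exists2 d, I d & forall Q, List.In Q Qs -> minimal_prime Q -> ~ Q (r + d).
Proof.
elim: Qs => [|P Qs IH] IQs; first by exists 0; first exact: (ideal0 (ideal_ax I)).
have [d Id avoid] := IH (fun Q inQ => IQs Q (or_intror inQ)).
case: (classic (minimal_prime P /\ P (r + d))) => [[mP Prd] | ok]; last first.
  by exists d => // Q [<- mQ Qrd | ]; [apply: ok | apply: avoid].
(* A listed minimal prime inside P would equal P, yet it avoids r + d, which lies in P. *)
have QsP Q : List.In Q Qs -> minimal_prime Q -> ~ subI Q P.
  move=> inQ mQ sQP; apply: (avoid Q inQ mQ).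
  exact: (minimal_prime_sub mP mQ.1 sQP).2.
have [z [Iz Qsz nPz]] :=
  ideal_cap_minimal_primes_not_sub mP.1 (IQs P (or_introl erefl) mP) QsP.
exists (d + z); first exact: (idealD (ideal_ax I) Id Iz).
move=> Q [<- _ | inQ mQ]; rewrite addrA => Qrdz.
- apply: nPz; have := idealB (prime_is_ideal mP.1) Qrdz Prd.
  by rewrite [r + d + z]addrC addrK.
- apply: (avoid Q inQ mQ).
  by have := idealB (prime_is_ideal mQ.1) Qrdz (Qsz Q inQ mQ); rewrite addrK.
Qed.

Lemma Rcirc_of_prime_cover {Qs} x : prime_cover (principal 0) Qs ->
  (forall Q, List.In Q Qs -> minimal_prime Q -> ~ Q x) -> Rcirc x.
Proof.
move=> [Qs_prime Qs_cover] avoid P mP Px.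
have [Q inQ sQP] : exists2 Q, List.In Q Qs & subI Q P.
  by apply: Qs_cover mP.1 _ => _ /principal0 ->; apply: (ideal0 (prime_is_ideal mP.1)).
have [mQ sPQ] := minimal_prime_sub mP (Qs_prime Q inQ).1 sQP.
exact: (avoid Q inQ mQ (sPQ x Px)).
Qed.

Lemma noetherian_Rcirc_coset (hN : noetherian R) {I : ideal R} r :
  (forall P, minimal_prime P -> ~ subI I P) -> exists2 d, I d & Rcirc (r + d).
Proof.
move=> IP; have [Qs cover] := prime_cover_exists hN (principal_ideal 0).
have [d Id avoid] := coset_avoids_minimal_primes r (fun Q _ mQ => IP Q mQ) (Qs := Qs).
by exists d => //; apply: Rcirc_of_prime_cover cover avoid.
Qed.

Lemma height_ge1_not_sub_minimal_prime {L P} :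
  height_ge 1 L -> minimal_prime P -> ~ subI L P.
Proof.
move=> hL [pP minP] sLP; have [Q [EQ0 Qprime Qchain]] := hL P pP sLP.
have [sQ10 [x [Q0x nQ1x]]] := Qchain 0%N isT.
apply/nQ1x/(minP _ (Qprime 1%N isT)); last exact/EQ0.
by move=> y /sQ10 /EQ0.
Qed.

End MinimalPrimes.

Section GradedModule.
Context {R : comNzRingType} (p : nat).
Implicit Types (a : ideal R) (r z : R).

Lemma frob_is_ideal (a : R -> Prop) n : is_ideal (frob p a n).
Proof. exact: gen_ideal_is_ideal. Qed.

Definition frob_ideal (a : R -> Prop) n : ideal R := Ideal (frob_is_ideal a n).

Lemma frob_gen {a : R -> Prop} n {s} : a s -> frob p a n (s ^+ (p ^ n)).
Proof. by move=> As; apply: gen_ideal_sub; exists s. Qed.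

Lemma nth_homog r k i : (homog r k)`_i = if i == k then r else 0.
Proof. by rewrite /homog nth_rcons size_nseq nth_nseq; case: ltngtP. Qed.

Lemma act_homog r k (h : Hrep R) a m :
  act p (homog r k) h a m = if (k <= m)%N then r * h a (m - k)%N ^+ (p ^ k) else 0.
Proof.
rewrite /act size_rcons size_nseq big_ord_recr /= big1 ?add0r.
  by rewrite nth_homog eqxx.
by move=> i _; rewrite nth_homog (ltn_eqF (ltn_ord i)) mul0r if_same.
Qed.

Lemma act_homog_add r k (h : Hrep R) a n :
  act p (homog r k) h a (n + k)%N = r * h a n ^+ (p ^ k).
Proof. by rewrite act_homog leq_addl addnK. Qed.

Lemma grann_is_ideal (N : Hrep R -> Prop) n : is_ideal (grann p N n).
Proof.
split=> [|x y Gx Gy|r x Gx] h hH Nh a k; rewrite !act_homog.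
- by rewrite mul0r if_same; apply: ideal0 (frob_is_ideal a k).
- case: ifP (Gx h hH Nh a k) (Gy h hH Nh a k); rewrite !act_homog => -> // Fx Fy.
  by rewrite mulrDl; apply: (idealD (frob_is_ideal a k) Fx Fy).
- case: ifP (Gx h hH Nh a k); rewrite !act_homog => -> // Fx.
  by rewrite -mulrA; apply: (idealMl (frob_is_ideal a k) r Fx).
Qed.

Definition single_H a z : Hrep R :=
  fun b k => if excluded_middle_informative (b = a /\ k = 0%N) then z else 0.

Lemma single_H_at a z : single_H a z a 0 = z.
Proof. by rewrite /single_H; case: excluded_middle_informative => // -[]. Qed.

Lemma single_H_inH a z : inH p (single_H a z).
Proof.
exists [:: (a, 0%N)] => b k /= nin; rewrite /single_H.
case: excluded_middle_informative => [[ba k0] | _] /=; first by case: nin; left; rewrite ba k0.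
exact: ideal0 (frob_is_ideal b k).
Qed.

End GradedModule.

Section Frobenius.
Context {R : comNzRingType} {p : nat} (hp : p \in [pchar R]).
Implicit Types (a : R -> Prop) (x y z : R).

Lemma exprDpn x y n : (x + y) ^+ (p ^ n) = x ^+ (p ^ n) + y ^+ (p ^ n).
Proof. by rewrite exprDn_pchar // pnatX (pnatE _ (pcharf_prime hp)) hp. Qed.

Lemma expr0pn n : (0 : R) ^+ (p ^ n) = 0.
Proof. by rewrite expr0n eqn0Ngt expn_gt0 prime_gt0 // (pcharf_prime hp). Qed.

Lemma frob_frob a n m : eqI (frob p (frob p a n) m) (frob p a (n + m)).
Proof.
move=> z; split; last first.
  apply: (gen_ideal_min (frob_ideal p _ m)) => _ [s As ->].
  by rewrite expnD exprM; do 2!apply: frob_gen.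
(* x |-> x ^+ p ^ m is a ring endomorphism in characteristic p, so X is an ideal. *)
pose X x := frob p a (n + m) (x ^+ (p ^ m)).
have X_ideal : is_ideal X.
  have hF := frob_is_ideal p a (n + m).
  split=> [|x y Xx Xy|r x Xx]; rewrite /X ?expr0pn ?exprDpn ?exprMn.
  - exact: ideal0 hF.
  - exact: (idealD hF Xx Xy).
  - exact: (idealMl hF _ Xx).
have frob_X : subI (frob p a n) X.
  apply: (gen_ideal_min (Ideal X_ideal)) => _ [s As ->].
  by rewrite /= /X -exprM -expnD; apply: frob_gen.
apply: (gen_ideal_min (frob_ideal p a (n + m))) => _ [x /frob_X Xx ->].
exact: Xx.
Qed.

Lemma tight_frob {a z} k : tight p a z -> tight p (frob p a k) (z ^+ (p ^ k)).
Proof.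
move=> [d Rd [N HN]]; exists d => //; exists N => n Nn.
apply/frob_frob; rewrite -exprM -expnD; apply: HN.
exact: leq_trans Nn (leq_addl k n).
Qed.

Lemma tight0 a : tight p a 0.
Proof.
exists 1; first exact: Rcirc1.
by exists 0%N => n _; rewrite expr0pn mulr0; apply: ideal0 (frob_is_ideal p a n).
Qed.

Lemma single_H_Tsub {a : ideal R} {z} : tight p a z -> Tsub p (single_H a z).
Proof.
move=> az b k; rewrite /single_H.
case: excluded_middle_informative => [[ba k0] | _] /=; last exact: tight0.
by rewrite ba k0; have := tight_frob 0 az; rewrite expn0 expr1.
Qed.

End Frobenius.

Section TightAnnihilator.
Context {R : comNzRingType} (p : nat).

Definition tight_ann n (r : R) : Prop :=
  forall (a : ideal R) z, tight p a z -> frob p a n (r * z ^+ (p ^ n)).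

Lemma tight_ann_is_ideal n : is_ideal (tight_ann n).
Proof.
have hF (a : ideal R) := frob_is_ideal p a n.
split=> [|x y Ax Ay|r x Ax] a z az.
- by rewrite mul0r; apply: (ideal0 (hF a)).
- by rewrite mulrDl; apply: (idealD (hF a) (Ax a z az) (Ay a z az)).
- by rewrite -mulrA; apply: (idealMl (hF a) r (Ax a z az)).
Qed.

Definition tight_ann_ideal n : ideal R := Ideal (tight_ann_is_ideal n).

Lemma weak_test_ideal_is_ideal : is_ideal (weak_test_ideal (R:=R) p).
Proof. exact: gen_ideal_is_ideal. Qed.

Lemma weak_test_in_ideal {w} {d : R} : weak_test p w d -> weak_test_ideal p d.
Proof. by move=> wd; apply: gen_ideal_sub; right; exists w. Qed.

End TightAnnihilator.

Section TightAnnihilatorChain.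
Context {R : comNzRingType} {p : nat}.

Lemma weak_test_tight_ann {w} {d : R} : weak_test p w d -> tight_ann p w d.
Proof. by move=> [_ wd] a z /(wd a z); apply. Qed.

Context (hp : p \in [pchar R]).

Lemma tight_ann_succ n (r : R) : tight_ann p n r -> tight_ann p n.+1 r.
Proof.
move=> Ar a z az; have := Ar (frob_ideal p a 1) _ (tight_frob hp 1 az).
by move=> /= /(frob_frob hp); rewrite -exprM -expnD add1n.
Qed.

Lemma tight_ann_mono {n k} (r : R) : (n <= k)%N -> tight_ann p n r -> tight_ann p k r.
Proof.
move/subnK <-; elim: (k - n)%N => [//|j IH] /IH.
by rewrite addSn; apply: tight_ann_succ.
Qed.

Lemma weak_test_of_tight_ann {n} {d : R} : tight_ann p n d -> Rcirc d -> weak_test p n d.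
Proof.
move=> Ad Rd; split=> // a z; split=> [az k nk | dz].
  exact: (tight_ann_mono d nk Ad a z az).
by exists d => //; exists n.
Qed.

Lemma grann_Tsub n : eqI (grann p (Tsub (R:=R) p) n) (tight_ann p n).
Proof.
move=> r; split=> [Gr a z az | Ar h _ Th a k].
  have := Gr _ (single_H_inH p a z) (single_H_Tsub hp az) a (0 + n)%N.
  by rewrite act_homog_add single_H_at add0n.
rewrite act_homog; case: leqP => nk; last exact: ideal0 (frob_is_ideal p a k).
have := Ar (frob_ideal p a (k - n)) _ (Th a (k - n)%N).
by move=> /= /(frob_frob hp); rewrite subnK.
Qed.

End TightAnnihilatorChain.

Definition test_chain {R : comNzRingType} w0 (c : R) n r : Prop :=
  if (w0 <= n)%N then principal c r else r = 0.

Section WeakTestElement.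
Context {R : comNzRingType} {p w0 : nat} {c : R}.
Hypotheses (hp : p \in [pchar R]) (hc : weak_test p w0 c).

Lemma Tsub_annH h : Tsub p h <-> annH p (test_chain w0 c) h.
Proof.
split=> [Th theta Btheta a m | Ah a n].
  have hF := frob_is_ideal p a m.
  rewrite /act; apply: (ideal_sum hF) => i; case: ifP => im; last exact: (ideal0 hF).
  move: (Btheta i); rewrite /test_chain; case: ifP => [w0i [s ->] | _ ->]; last first.
    by rewrite mul0r; apply: (ideal0 hF).
  rewrite -mulrA; apply: (idealMl hF).
  have := (hc.2 (frob_ideal p a (m - i)) (h a (m - i)%N)).1 (Th a (m - i)%N) i w0i.
  by move=> /= /(frob_frob hp); rewrite subnK.
apply: (hc.2 (frob_ideal p a n) (h a n)).2 => k w0k /=; apply/(frob_frob hp).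
have := Ah (homog c k) _ a (n + k)%N; rewrite act_homog_add; apply.
move=> i; rewrite nth_homog /test_chain; case: eqP => [-> | _].
  by rewrite w0k; apply: principal_gen.
by case: ifP => // _; apply: (ideal0 (principal_is_ideal c)).
Qed.

Lemma Tsub_special : special p (Tsub (R:=R) p).
Proof.
pose b n := principal_ideal (if (w0 <= n)%N then c else 0).
have bE n r : b n r <-> test_chain w0 c n r.
  by rewrite /b /test_chain /=; case: ifP => _; [| apply: principal0].
exists b; split.
  move=> n r; rewrite /b /=; case: (leqP w0 n) => [w0n | _]; first by rewrite (leqW w0n).
  by move/principal0 ->; apply: (ideal0 (principal_is_ideal _)).
move=> h _; rewrite Tsub_annH.
by split=> Ah theta Btheta; apply: Ah => i; apply/bE.
Qed.

Lemma tight_ann_sub_weak_test_ideal (hN : noetherian R) n (r : R) :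
  (w0 <= n)%N -> tight_ann p n r -> weak_test_ideal (R:=R) p r.
Proof.
move=> w0n Ar; have hA := tight_ann_is_ideal (R:=R) p n.
have c_avoids P : minimal_prime P -> ~ subI (principal_ideal c) P.
  by move=> mP sub; apply: hc.1 P mP (sub c (principal_gen c)).
have [_ [u ->] Rd] := noetherian_Rcirc_coset hN r c_avoids.
have Ac : tight_ann p n c := tight_ann_mono hp c w0n (weak_test_tight_ann hc).
have W : weak_test p n (r + u * c).
  exact: (weak_test_of_tight_ann hp (idealD hA Ar (idealMl hA u Ac)) Rd).
have hT := weak_test_ideal_is_ideal (R:=R) p.
have := idealB hT (weak_test_in_ideal p W) (idealMl hT u (weak_test_in_ideal p hc)).
by rewrite addrK.
Qed.

End WeakTestElement.

Lemma tight_ann_eventually_weak_test_ideal {R : comNzRingType} {p w0 : nat} {c : R}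
    (hp : p \in [pchar R]) (hc : weak_test p w0 c) (hN : noetherian R) :
  exists N, forall n, (N <= n)%N -> eqI (tight_ann p n) (weak_test_ideal (R:=R) p).
Proof.
have [N stable] := hN (tight_ann_ideal p) (tight_ann_succ hp).
exists (maxn N w0) => n; rewrite geq_max => /andP [Nn w0n] r.
split=> [|Tr]; first exact: (tight_ann_sub_weak_test_ideal hp hc hN n r w0n).
apply: (gen_ideal_min (tight_ann_ideal p n)) Tr => y [-> | [w wy]].
  exact: (ideal0 (tight_ann_is_ideal p n)).
(* A p^w-weak test element lies in C_w, hence in C_(max n w) = C_N = C_n. *)
apply: (stable n Nn y).2; apply: (stable _ (leq_trans Nn (leq_maxl n w)) y).1.
exact: (tight_ann_mono hp y (leq_maxr n w) (weak_test_tight_ann wy)).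
Qed.

Lemma sub_Tsub_of_grann_height {R : comNzRingType} {p} (hp : p \in [pchar R])
    (hN : noetherian R) {T' : Hrep R -> Prop} {L : R -> Prop} {N0} :
  (forall n, (N0 <= n)%N -> eqI (grann p T' n) L) -> height_ge 1 L ->
  subH p T' (Tsub (R:=R) p).
Proof.
move=> grannL hL h hH T'h a k.
have L_avoids P : minimal_prime P -> ~ subI (Ideal (grann_is_ideal p T' N0)) P.
  move=> mP sGP; apply: height_ge1_not_sub_minimal_prime hL mP _.
  by move=> x /(grannL N0 (leqnn N0)) /sGP.
have [d Gd] := noetherian_Rcirc_coset hN 0 L_avoids; rewrite add0r => Rd.
exists d => //; exists N0 => n N0n; apply/(frob_frob hp).
have Gnd : grann p T' n d by apply/(grannL n N0n)/(grannL N0 (leqnn N0)).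
by have := Gnd h hH T'h a (k + n)%N; rewrite act_homog_add.
Qed.

Theorem theorem2p6 (R : comNzRingType) (p : nat) (hp : p \in [pchar R])
    (hN : noetherian R) (w0 : nat) (c : R) (hc : weak_test p w0 c) :
  (* (i) *)
  (eqH p (Tsub (R:=R) p) (annH p (fun n r => if (w0 <= n)%N then exists s : R, r = s * c else r = 0))
   /\ special p (Tsub (R:=R) p))
  /\
  (* (ii) *)
  (exists N0, forall n, (N0 <= n)%N -> eqI (grann p (Tsub (R:=R) p) n) (weak_test_ideal (R:=R) p))
  /\
  (* (iii) *)
  (forall T' : Hrep R -> Prop, special p T' ->
     forall L : R -> Prop,
       (exists N0, forall n, (N0 <= n)%N -> eqI (grann p T' n) L) ->
       height_ge 1 L ->
       subH p T' (Tsub (R:=R) p)).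
Proof.
split; [split | split].
- by move=> h _; apply: Tsub_annH hp hc h.
- exact: Tsub_special hp hc.
- have [N stable] := tight_ann_eventually_weak_test_ideal hp hc hN.
  by exists N => n Nn r; rewrite grann_Tsub //; apply: stable.
-
  by move=> T' _ L [N0 grannL]; apply: (sub_Tsub_of_grann_height hp hN grannL).
Qed.
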